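(* Let $A$ be a noetherian adic ring with ideal of definition $I$, let $S$ be a profinite set, let $C(S,A)$ denote the ring of continuous maps $S\to A$, and let $f\in A$. Let $\widehat{(\cdot)}$ denote $I$-adic completion. Then the natural map $$\widehat{C(S,A)[f^{-1}]}\longrightarrow C\big(S,\widehat{A[f^{-1}]}\big)$$ is an isomorphism. *)

From HB Require Import structures.
From mathcomp Require Import all_boot all_order all_algebra.
From mathcomp Require Import all_classical all_reals all_analysis.
Set Implicit Arguments. Unset Strict Implicit. Unset Printing Implicit Defensive.
Import Order.TTheory GRing.Theory Num.Theory.
Local Open Scope classical_set_scope.
Local Open Scope ring_scope.

Definition list_all {T : Type} (P : T -> Prop) (s : seq T) : Prop :=
  foldr (fun x acc => P x /\ acc) True s.

Section Ideals.
Variable A : comPzRingType.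

Definition is_ideal (J : A -> Prop) : Prop :=
  [/\ J 0, (forall x y, J x -> J y -> J (x + y)) &
      (forall a x, J x -> J (a * x))].

Definition noetherian_ring : Prop :=
  forall J : nat -> (A -> Prop),
    (forall n, is_ideal (J n)) ->
    (forall n x, J n x -> J n.+1 x) ->
    exists N, forall m x, (N <= m)%N -> J m x -> J N x.

Fixpoint Ipow (I : A -> Prop) (n : nat) : A -> Prop :=
  match n with
  | 0%N => fun _ => True
  | n'.+1 => fun x => exists s : seq (A * A),
       list_all (fun p => I p.1 /\ Ipow I n' p.2) s /\
       x = \sum_(p <- s) p.1 * p.2
  end.

Definition adic_ring (I : A -> Prop) : Prop :=
  is_ideal I /\
  (forall x, (forall n, Ipow I n x) -> x = 0) /\
  (forall a : nat -> A, (forall n, Ipow I n (a n.+1 - a n)) ->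
     exists l, forall n, Ipow I n (l - a n)).

End Ideals.

(* The localization B = A[f^-1], as representatives a/f^k = (a,k).     *)
Section Loc.
Variables (A : comPzRingType) (I : A -> Prop) (f : A).

Definition Brep := (A * nat)%type.
Definition eqB (x y : Brep) : Prop :=
  exists m, f ^+ m * (x.1 * f ^+ y.2 - y.1 * f ^+ x.2) = 0.
Definition addB (x y : Brep) : Brep := (x.1 * f ^+ y.2 + y.1 * f ^+ x.2, (x.2 + y.2)%N).
Definition mulB (x y : Brep) : Brep := (x.1 * y.1, (x.2 + y.2)%N).
Definition oppB (x : Brep) : Brep := (- x.1, x.2).
Definition subB x y := addB x (oppB y).
Definition zeroB : Brep := (0, 0%N).
Definition oneB : Brep := (1, 0%N).
Definition iotaB (a : A) : Brep := (a, 0%N).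

Definition IpowB (n : nat) (x : Brep) : Prop :=
  exists s : seq (Brep * A),
    list_all (fun p => Ipow I n p.2) s /\
    eqB x (foldr addB zeroB (map (fun p => mulB p.1 (iotaB p.2)) s)).

(* The I-adic completion of B: compatible systems in lim B/I^nB, represented by
   sequences (b_n) with b_(n+1) = b_n mod I^n B; two are equal iff
   b_n = b'_n mod I^n B for all n. *)
Definition hatB_elem (b : nat -> Brep) : Prop :=
  forall n, IpowB n (subB (b n.+1) (b n)).
Definition eqHatB (b b' : nat -> Brep) : Prop :=
  forall n, IpowB n (subB (b n) (b' n)).
Definition addHatB (b b' : nat -> Brep) := fun n => addB (b n) (b' n).
Definition mulHatB (b b' : nat -> Brep) := fun n => mulB (b n) (b' n).
Definition oneHatB : nat -> Brep := fun _ => oneB.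

Variable S : topologicalType.

Definition cont_adic (g : S -> A) : Prop :=
  forall n (s : S), nbhs s [set t | Ipow I n (g t - g s)].

(* continuity of h : S -> hat(B) for the completion (inverse limit) topology,
   whose basic neighbourhoods of 0 are the kernels of hat(B) -> B/I^n B *)
Definition cont_hatB (h : S -> nat -> Brep) : Prop :=
  forall n (s : S), nbhs s [set t | IpowB n (subB (h t n) (h s n))].

(* R = C(S,A)[f^-1] : representatives g/f^k = (g,k), g continuous. *)
Definition Rrep := ((S -> A) * nat)%type.
Definition Rvalid (x : Rrep) : Prop := cont_adic x.1.
Definition eqR (x y : Rrep) : Prop :=
  exists m, forall s, f ^+ m * (x.1 s * f ^+ y.2 - y.1 s * f ^+ x.2) = 0.
Definition addR (x y : Rrep) : Rrep :=
  (fun s => x.1 s * f ^+ y.2 + y.1 s * f ^+ x.2, (x.2 + y.2)%N).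
Definition mulR (x y : Rrep) : Rrep := (fun s => x.1 s * y.1 s, (x.2 + y.2)%N).
Definition oppR (x : Rrep) : Rrep := (fun s => - x.1 s, x.2).
Definition subR x y := addR x (oppR y).
Definition zeroR : Rrep := (fun _ => 0, 0%N).
Definition oneR : Rrep := (fun _ => 1, 0%N).
Definition iotaR (a : A) : Rrep := (fun _ => a, 0%N).

Definition IpowR (n : nat) (x : Rrep) : Prop :=
  exists s : seq (Rrep * A),
    list_all (fun p => Rvalid p.1 /\ Ipow I n p.2) s /\
    eqR x (foldr addR zeroR (map (fun p => mulR p.1 (iotaR p.2)) s)).

Definition hatR_elem (x : nat -> Rrep) : Prop :=
  (forall n, Rvalid (x n)) /\ (forall n, IpowR n (subR (x n.+1) (x n))).
Definition eqHatR (x y : nat -> Rrep) : Prop :=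
  forall n, IpowR n (subR (x n) (y n)).
Definition addHatR (x y : nat -> Rrep) := fun n => addR (x n) (y n).
Definition mulHatR (x y : nat -> Rrep) := fun n => mulR (x n) (y n).
Definition oneHatR : nat -> Rrep := fun _ => oneR.

(* The natural map hat(R) -> C(S, hat(B)): the completion of the map
   R -> C(S, hat B), g/f^k |-> (s |-> g(s)/f^k). *)
Definition Phi (x : nat -> Rrep) : S -> nat -> Brep :=
  fun s n => ((x n).1 s, (x n).2).

End Loc.

Definition profinite (S : topologicalType) : Prop :=
  [/\ compact [set: S], hausdorff_space S & totally_disconnected [set: S]].

(* Everything rests on one fact: for a continuous g : S -> A, the fraction g/f^k
   lies in I^n C(S,A)[1/f] as soon as every value g(t)/f^k lies in I^n A[1/f].
   By compactness a single power f^e moves g into I^n pointwise. As A is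
   noetherian, I^n is generated by finitely many g_1, ..., g_r, and a continuous
   function with values in I^n is a combination of the g_i with continuous
   coefficients: these are built by successive approximation with locally constant
   coefficients and summed using I-adic completeness. This fact gives injectivity.
   For surjectivity, a continuous h into the completion is locally constant
   modulo I^n, so by compactness it takes finitely many values there, which can be
   put over a common denominator. *)

From HB Require Import structures.
From mathcomp Require Import all_boot all_order all_algebra.
From mathcomp Require Import all_classical all_reals all_analysis.
From mathcomp Require Import ring.
Set Implicit Arguments. Unset Strict Implicit. Unset Printing Implicit Defensive.
Import Order.TTheory GRing.Theory Num.Theory.
Local Open Scope classical_set_scope.
Local Open Scope ring_scope.

Lemma list_all_cat {T : Type} (P : T -> Prop) s1 s2 :
  list_all P (s1 ++ s2) <-> list_all P s1 /\ list_all P s2.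
Proof. by elim: s1 => [|x s IHs] /=; [tauto | rewrite IHs; tauto]. Qed.

Lemma list_all_map {T U : Type} (P : U -> Prop) (g : T -> U) s :
  list_all P (map g s) <-> list_all (P \o g) s.
Proof. by elim: s => [|x s IHs] //=; rewrite IHs. Qed.

Lemma sub_list_all {T : Type} (P Q : T -> Prop) s :
  (forall x, P x -> Q x) -> list_all P s -> list_all Q s.
Proof. by move=> PQ; elim: s => [|x s IHs] //= [/PQ Qx /IHs]. Qed.

Lemma list_allT {T : Type} (P : T -> Prop) s : (forall x, P x) -> list_all P s.
Proof. by move=> PT; elim: s => [|x s IHs] //=. Qed.

Section Ideal.
Variables (A : comPzRingType) (J : A -> Prop).
Hypothesis idealJ : is_ideal J.

Lemma is_ideal0 : J 0.
Proof. by case: idealJ. Qed.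

Lemma is_idealD x y : J x -> J y -> J (x + y).
Proof. by case: idealJ => _ + _; apply. Qed.

Lemma is_idealMl a x : J x -> J (a * x).
Proof. by case: idealJ => _ _; apply. Qed.

Lemma is_idealMr a x : J x -> J (x * a).
Proof. by rewrite mulrC; apply: is_idealMl. Qed.

Lemma is_idealN x : J x -> J (- x).
Proof. by rewrite -mulN1r; apply: is_idealMl. Qed.

Lemma is_idealB x y : J x -> J y -> J (x - y).
Proof. by move=> Jx /is_idealN; apply: is_idealD. Qed.

Lemma is_ideal_sum (T : Type) (r : seq T) (F : T -> A) :
  (forall i, J (F i)) -> J (\sum_(i <- r) F i).
Proof. by move=> JF; elim/big_ind: _ => //; [apply: is_ideal0 | apply: is_idealD]. Qed.

Definition eqmod x y := J (x - y).

Lemma eqmod_refl x : eqmod x x.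
Proof. by rewrite /eqmod subrr; apply: is_ideal0. Qed.

Lemma eqmod_sym x y : eqmod x y -> eqmod y x.
Proof. by move=> /is_idealN; rewrite opprB. Qed.

Lemma eqmod_trans x y z : eqmod x y -> eqmod y z -> eqmod x z.
Proof. by move=> Jxy Jyz; rewrite /eqmod -(subrKA y); apply: is_idealD. Qed.

End Ideal.

Section IdealPower.
Variables (A : comPzRingType) (I : A -> Prop).

Lemma IpowSW n x : Ipow I n.+1 x -> Ipow I n x.
Proof.
elim: n x => [|n IHn] x //= [s [Is ->]].
by exists s; split=> //; apply: sub_list_all Is => p [Ip /IHn].
Qed.

Lemma Ipow_leW m n x : (m <= n)%N -> Ipow I n x -> Ipow I m x.
Proof.
elim: n x => [|n IHn] x; first by rewrite leqn0 => /eqP ->.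
by rewrite leq_eqVlt ltnS => /predU1P [-> // | /IHn IHm /IpowSW /IHm].
Qed.

Lemma Ipow_ideal n : is_ideal (Ipow I n).
Proof.
elim: n => [|n IHn]; first by [].
split.
- by exists [::]; rewrite big_nil.
- move=> _ _ [s [Is ->]] [s' [Is' ->]]; exists (s ++ s').
  by split; [apply/list_all_cat | rewrite big_cat].
- move=> a _ [s [Is ->]]; exists [seq (p.1, a * p.2) | p <- s]; split.
    apply/list_all_map; apply: sub_list_all Is => p [Ip Jp].
    by split=> //; apply: is_idealMl.
  by rewrite big_map big_distrr; apply: eq_bigr => p _ /=; rewrite mulrCA.
Qed.

Lemma IpowS_mul n x y : I x -> Ipow I n y -> Ipow I n.+1 (x * y).
Proof. by exists [:: (x, y)]; rewrite big_seq1. Qed.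

End IdealPower.

Section FinitelyGenerated.
Variable A : comPzRingType.

Definition lincomb (gs : seq A) (r : nat -> A) := \sum_(i < size gs) gs`_i * r i.

Definition spanned (gs : seq A) (x : A) := exists r, x = lincomb gs r.

Lemma lincomb0 gs : lincomb gs (fun=> 0) = 0.
Proof. by apply: big1 => i _; rewrite mulr0. Qed.

Lemma lincombD gs r r' :
  lincomb gs (fun i => r i + r' i) = lincomb gs r + lincomb gs r'.
Proof. by rewrite /lincomb -big_split; apply: eq_bigr => i _; rewrite mulrDr. Qed.

Lemma lincombB gs r r' :
  lincomb gs (fun i => r i - r' i) = lincomb gs r - lincomb gs r'.
Proof. by rewrite /lincomb -sumrB; apply: eq_bigr => i _; rewrite mulrBr. Qed.

Lemma lincombMl gs a r : lincomb gs (fun i => a * r i) = a * lincomb gs r.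
Proof. by rewrite /lincomb big_distrr; apply: eq_bigr => i _; rewrite mulrCA. Qed.

Lemma ideal_lincomb (J : A -> Prop) gs r :
  is_ideal J -> (forall i, J (r i)) -> J (lincomb gs r).
Proof. by move=> idealJ Jr; apply: is_ideal_sum => // i; apply: is_idealMl. Qed.

Lemma spanned_ideal gs : is_ideal (spanned gs).
Proof.
split; first by exists (fun=> 0); rewrite lincomb0.
- by move=> _ _ [r ->] [r' ->]; exists (fun i => r i + r' i); rewrite lincombD.
- by move=> a _ [r ->]; exists (fun i => a * r i); rewrite lincombMl.
Qed.

Lemma spanned_rcons gs y x : spanned gs x -> spanned (rcons gs y) x.
Proof.
move=> [r ->]; exists (fun i => if (i < size gs)%N then r i else 0).
rewrite /lincomb size_rcons big_ord_recr /= ltnn mulr0 addr0.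
by apply: eq_bigr => i _; rewrite nth_rcons ltn_ord.
Qed.

Lemma spanned_rcons_last gs y : spanned (rcons gs y) y.
Proof.
exists (fun i => (i == size gs)%:R).
rewrite /lincomb size_rcons big_ord_recr /= nth_rcons ltnn !eqxx mulr1.
by rewrite big1 ?add0r // => i _; rewrite ltn_eqF ?mulr0.
Qed.

(* Otherwise, choosing at each step an element outside the span of the previous
   ones yields a strictly increasing chain of ideals. *)
Lemma noetherian_ideal_fg (J : A -> Prop) : noetherian_ring A -> is_ideal J ->
  exists gs, (forall i, (i < size gs)%N -> J gs`_i) /\ (forall x, J x -> spanned gs x).
Proof.
move=> noethA idealJ; apply: contrapT => not_fg.
pose gen (gs : seq A) := [set x | J x /\ ~ spanned gs x].
have genP gs : (forall i, (i < size gs)%N -> J gs`_i) -> gen gs (xget 0 (gen gs)).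
  move=> Jgs; apply: xgetPex; apply: contrapT => /forallNP no_gen.
  apply: not_fg; exists gs; split=> // x Jx; apply: contrapT => nspan.
  exact: (no_gen x).
pose fix chain k := if k is k.+1 then rcons (chain k) (xget 0 (gen (chain k))) else [::].
have Jchain k i : (i < size (chain k))%N -> J (chain k)`_i.
  elim: k i => [|k IHk] i //=; rewrite size_rcons nth_rcons ltnS leq_eqVlt.
  case/orP=> [/eqP ->|lti]; last by rewrite lti; apply: IHk.
  by rewrite ltnn eqxx; case: (genP _ IHk).
have [N stable] := noethA (fun k => spanned (chain k)) (fun k => spanned_ideal _)
  (fun k x => @spanned_rcons _ _ x).
case: (genP _ (Jchain N)) => _; apply.
by apply: (stable N.+1) => //; apply: spanned_rcons_last.
Qed.

End FinitelyGenerated.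

Section ClassRepresentative.
Variables (S : topologicalType) (T : Type) (E : T -> T -> Prop) (H : S -> T).

(* Chosen through the class of t only, hence constant on classes, and locally
   constant when the classes are open. *)
Definition class_rep (t : S) : S := xget t [set t' | E (H t) (H t')].

Hypotheses (E_refl : forall x, E x x) (E_sym : forall x y, E x y -> E y x)
  (E_trans : forall x y z, E x y -> E y z -> E x z).

Lemma class_repP t : E (H t) (H (class_rep t)).
Proof. exact: (@xgetI _ t [set t' | E (H t) (H t')] t (E_refl _)). Qed.

Lemma class_rep_eq t t' : E (H t) (H t') -> class_rep t = class_rep t'.
Proof.
move=> Ett'; rewrite /class_rep.
have -> : [set u | E (H t) (H u)] = [set u | E (H t') (H u)].
  by apply/seteqP; split=> u /=; [apply: E_trans (E_sym Ett') | apply: E_trans Ett'].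
rewrite /xget; case: pselect => // no_rep; exfalso; apply: no_rep.
by exists t'; apply/asboolP; apply: E_refl.
Qed.

Lemma class_rep_locally_constant :
  (forall s, \forall t \near s, E (H t) (H s)) ->
  forall s, \forall t \near s, class_rep t = class_rep s.
Proof. by move=> H_cont s; apply: filterS (H_cont s) => t; apply: class_rep_eq. Qed.

End ClassRepresentative.

Lemma compact_uniform_index (S : topologicalType) (P : nat -> S -> Prop) :
  compact [set: S] -> (forall i j t, (i <= j)%N -> P i t -> P j t) ->
  (forall s : S, exists i, \forall t \near s, P i t) -> exists i, forall t, P i t.
Proof.
move=> /compact_near_coveringP cptS P_mono P_loc.
have : \forall i \near \oo, [set: S] `<=` P i.
  apply: cptS => s _; have [i Pi] := P_loc s.
  exists ([set t | P i t], [set j | (i <= j)%N]); first by split=> //=; exists i.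
  by move=> [t j] /= [Pit ij]; apply: P_mono ij Pit.
by case=> N _ PN; exists N => t; apply: (PN N) => /=.
Qed.

Section AdicContinuity.
Variables (A : comPzRingType) (I : A -> Prop) (S : topologicalType).
Let IpowI := Ipow_ideal I.

Lemma cont_adic_locally_constant (g : S -> A) :
  (forall s, \forall t \near s, g t = g s) -> cont_adic I g.
Proof.
move=> g_lc m s; apply: filterS (g_lc s) => t /= ->.
by rewrite subrr; apply: is_ideal0 (IpowI m).
Qed.

Lemma cont_adicD (g g' : S -> A) :
  cont_adic I g -> cont_adic I g' -> cont_adic I (fun t => g t + g' t).
Proof.
move=> g_cont g'_cont m s; apply: filterS2 (g_cont m s) (g'_cont m s) => t /= Jg Jg'.
by rewrite opprD addrACA; exact: (is_idealD (IpowI m) Jg Jg').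
Qed.

Lemma cont_adicMl (a : A) (g : S -> A) :
  cont_adic I g -> cont_adic I (fun t => a * g t).
Proof.
move=> g_cont m s; apply: filterS (g_cont m s) => t /= Jg.
by rewrite -mulrBr; exact: (is_idealMl (IpowI m) _ Jg).
Qed.

Lemma cont_adicMr (a : A) (g : S -> A) :
  cont_adic I g -> cont_adic I (fun t => g t * a).
Proof. by move=> /(cont_adicMl a); under eq_fun do rewrite mulrC. Qed.

Lemma cont_adicN (g : S -> A) : cont_adic I g -> cont_adic I (fun t => - g t).
Proof. by move=> /(cont_adicMl (-1)); under eq_fun do rewrite mulN1r. Qed.

Lemma cont_adicB (g g' : S -> A) :
  cont_adic I g -> cont_adic I g' -> cont_adic I (fun t => g t - g' t).
Proof. by move=> g_cont /cont_adicN; apply: cont_adicD. Qed.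

Lemma cont_adic_uniform_limit (g : nat -> S -> A) (c : S -> A) :
  (forall K, cont_adic I (g K)) -> (forall K t, Ipow I K (c t - g K t)) ->
  cont_adic I c.
Proof.
move=> g_cont cg m s; apply: filterS (g_cont m m s) => t /= Jg.
have -> : c t - c s = (c t - g m t) + (g m t - g m s) - (c s - g m s) by ring.
exact: (is_idealB (IpowI m) (is_idealD (IpowI m) (cg m t) Jg) (cg m s)).
Qed.

Definition adic_rep m (H : S -> A) := class_rep (eqmod (Ipow I m)) H.

Lemma adic_repP m H t : Ipow I m (H t - H (adic_rep m H t)).
Proof. exact: (class_repP _ (eqmod_refl (IpowI m))). Qed.

Lemma adic_rep_locally_constant m H s : cont_adic I H ->
  \forall t \near s, adic_rep m H t = adic_rep m H s.
Proof.
move=> H_cont; apply: class_rep_locally_constant (H_cont m) s;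
  [apply: eqmod_refl | apply: eqmod_sym | apply: eqmod_trans]; apply: IpowI.
Qed.

End AdicContinuity.

Section ContinuousLincomb.
Variables (A : comPzRingType) (I : A -> Prop) (n : nat) (gs : seq A).
Hypothesis gs_span : forall x, Ipow I n x -> spanned gs x.
Let IpowI := Ipow_ideal I.

Lemma Ipow_addn_lincomb m x : Ipow I (m + n) x ->
  exists2 r, (forall i, Ipow I m (r i)) & x = lincomb gs r.
Proof.
elim: m x => [|m IHm] x; first by move=> /gs_span [r ->]; exists r.
rewrite addSn => -[s [Is ->]].
elim: s Is => [_|[a b] s IHs [[/= Ia /IHm [r Ir ->]] /IHs [r' Ir' Es]]].
  by exists (fun=> 0) => [i|]; [apply: is_ideal0 (IpowI _) | rewrite big_nil lincomb0].
exists (fun i => a * r i + r' i).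
  by move=> i; apply: (is_idealD (IpowI _) (IpowS_mul Ia (Ir i)) (Ir' i)).
by rewrite big_cons Es lincombD lincombMl.
Qed.

Definition coeffs m (x : A) : nat -> A :=
  xget (fun=> 0) [set r | (forall i, Ipow I m (r i)) /\ x = lincomb gs r].

Lemma coeffsP m x : Ipow I (m + n) x ->
  (forall i, Ipow I m (coeffs m x i)) /\ x = lincomb gs (coeffs m x).
Proof.
move=> /Ipow_addn_lincomb [r Ir ->]; rewrite /coeffs.
case: xgetP => [r' _ [Ir' Er'] | /(_ r) no_coeffs]; first by rewrite -Er'.
by exfalso; apply: no_coeffs.
Qed.

Variable S : topologicalType.

Definition lc_coeffs k (H : S -> A) t := coeffs k (H (adic_rep I (k + n).+1 H t)).

Lemma lc_coeffs_Ipow k H t i : (forall t, Ipow I (k + n) (H t)) ->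
  Ipow I k (lc_coeffs k H t i).
Proof.
by move=> H_Ipow; case: (coeffsP (H_Ipow (adic_rep I (k + n).+1 H t))) => Ic _; apply: Ic.
Qed.

Lemma lc_coeffsP k H t : (forall t, Ipow I (k + n) (H t)) ->
  Ipow I (k + n).+1 (H t - lincomb gs (lc_coeffs k H t)).
Proof.
move=> H_Ipow; have [_ <-] := coeffsP (H_Ipow (adic_rep I (k + n).+1 H t)).
exact: adic_repP.
Qed.

Lemma lc_coeffs_locally_constant k H s : cont_adic I H ->
  \forall t \near s, lc_coeffs k H t = lc_coeffs k H s.
Proof.
move=> H_cont; apply: filterS (adic_rep_locally_constant (k + n).+1 s H_cont) => t.
by rewrite /lc_coeffs => ->.
Qed.

Variable F : S -> A.
Hypotheses (F_cont : cont_adic I F) (F_Ipow : forall t, Ipow I n (F t)).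

Fixpoint adic_approx k : S -> A :=
  if k is k.+1 then fun t => adic_approx k t - lincomb gs (lc_coeffs k (adic_approx k) t)
  else F.

Lemma adic_approx_cont k : cont_adic I (adic_approx k).
Proof.
elim: k => [|k IHk] /=; first exact: F_cont.
apply: (cont_adicB IHk); apply: cont_adic_locally_constant => s.
by apply: filterS (lc_coeffs_locally_constant k s IHk) => t /= ->.
Qed.

Lemma adic_approx_Ipow k t : Ipow I (k + n) (adic_approx k t).
Proof.
elim: k t => [|k IHk] t; first exact: F_Ipow.
by rewrite addSn; apply: lc_coeffsP.
Qed.

Definition psum K i t := \sum_(k < K) lc_coeffs k (adic_approx k) t i.

Lemma adic_approx_psum K t : adic_approx K t = F t - lincomb gs (fun i => psum K i t).
Proof.
elim: K => [|K IHK] /=; rewrite /psum.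
  by under eq_fun do rewrite big_ord0; rewrite lincomb0 subr0.
by under eq_fun do rewrite big_ord_recr; rewrite IHK lincombD opprD addrA.
Qed.

Lemma psum_locally_constant K i s : \forall t \near s, psum K i t = psum K i s.
Proof.
elim: K => [|K IHK]; first by apply: nearW => t; rewrite /psum !big_ord0.
apply: filterS2 IHK (lc_coeffs_locally_constant K s (adic_approx_cont K)) => t.
by rewrite /psum !big_ord_recr /= => -> ->.
Qed.

Hypotheses (separatedI : forall x, (forall n, Ipow I n x) -> x = 0)
  (completeI : forall a : nat -> A, (forall n, Ipow I n (a n.+1 - a n)) ->
     exists l, forall n, Ipow I n (l - a n)).

Lemma cont_adic_lincomb : exists c : nat -> S -> A,
  (forall i, cont_adic I (c i)) /\ forall t, F t = lincomb gs (fun i => c i t).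
Proof.
have /choice [c cP] : forall it : nat * S,
    exists l, forall K, Ipow I K (l - psum K it.1 it.2).
  move=> [i t]; apply: completeI => K; rewrite /psum big_ord_recr /= addrC addrK.
  exact/lc_coeffs_Ipow/adic_approx_Ipow.
exists (fun i t => c (i, t)); split.
  move=> i; apply: (cont_adic_uniform_limit (g := fun K => psum K i)) => [K|K t].
    exact/cont_adic_locally_constant/psum_locally_constant.
  exact: (cP (i, t)).
move=> t; apply/eqP; rewrite -subr_eq0; apply/eqP; apply: separatedI => K.
have -> : F t - lincomb gs (fun i => c (i, t)) =
    adic_approx K t - lincomb gs (fun i => c (i, t) - psum K i t).
  by rewrite lincombB adic_approx_psum; ring.
apply: (is_idealB (IpowI K) (Ipow_leW (leq_addr n K) (adic_approx_Ipow K t))).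
by apply: ideal_lincomb (IpowI K) _ => i; apply: (cP (i, t)).
Qed.

End ContinuousLincomb.

Section Localization.
Variables (A : comPzRingType) (I : A -> Prop) (f : A).
Let IpowI := Ipow_ideal I.

Lemma Ipow_foldB n (l : seq (Brep A * A)) : list_all (fun p => Ipow I n p.2) l ->
  Ipow I n (foldr (addB f) (zeroB A) [seq mulB p.1 (iotaB p.2) | p <- l]).1.
Proof.
elim: l => [_|p l IHl [Ip /IHl Il]] /=; first exact: is_ideal0.
apply: (is_idealD (IpowI n)); apply: (is_idealMr (IpowI n)) => //.
exact: (is_idealMl (IpowI n) _ Ip).
Qed.

Lemma IpowBP n (b : Brep A) : IpowB I f n b <-> exists e, Ipow I n (f ^+ e * b.1).
Proof.
case: b => a k /=; split=> [[l [Il [m Em]]]|[e Ie]].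
  set q := foldr _ _ _ in Em; exists (m + q.2)%N.
  have -> : f ^+ (m + q.2) * a =
      f ^+ m * (a * f ^+ q.2 - q.1 * f ^+ k) + f ^+ m * f ^+ k * q.1 by rewrite exprD; ring.
  by rewrite Em add0r; apply: (is_idealMl (IpowI n) _ (Ipow_foldB Il)).
exists [:: ((1, (k + e)%N), f ^+ e * a)]; split=> //=.
by exists 0%N; rewrite /= !addn0 !exprD; ring.
Qed.

Definition congB n (b b' : Brep A) := IpowB I f n (subB f b b').

Lemma congBP n b b' : congB n b b' <->
  exists e, Ipow I n (f ^+ e * (b.1 * f ^+ b'.2 - b'.1 * f ^+ b.2)).
Proof. by rewrite /congB IpowBP /= mulNr. Qed.

Lemma congB_refl n b : congB n b b.
Proof. by apply/congBP; exists 0%N; rewrite subrr mulr0; apply: is_ideal0 (IpowI n). Qed.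

Lemma congB_sym n b b' : congB n b b' -> congB n b' b.
Proof.
move=> /congBP [e Ie]; apply/congBP; exists e.
by rewrite -opprB mulrN; exact: (is_idealN (IpowI n) Ie).
Qed.

Lemma congB_trans n b b' b'' : congB n b b' -> congB n b' b'' -> congB n b b''.
Proof.
move=> /congBP [e Ie] /congBP [e' Ie']; apply/congBP; exists (e + e' + b'.2)%N.
have -> : f ^+ (e + e' + b'.2) * (b.1 * f ^+ b''.2 - b''.1 * f ^+ b.2) =
    f ^+ (e' + b''.2) * (f ^+ e * (b.1 * f ^+ b'.2 - b'.1 * f ^+ b.2)) +
    f ^+ (e + b.2) * (f ^+ e' * (b'.1 * f ^+ b''.2 - b''.1 * f ^+ b'.2)).
  by rewrite !exprD; ring.
exact: (is_idealD (IpowI n) (is_idealMl (IpowI n) _ Ie) (is_idealMl (IpowI n) _ Ie')).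
Qed.

Lemma congBSW n b b' : congB n.+1 b b' -> congB n b b'.
Proof. by move=> /congBP [e /IpowSW Ie]; apply/congBP; exists e. Qed.

Lemma congB_expand n a k K : (k <= K)%N -> congB n (a * f ^+ (K - k), K) (a, k).
Proof.
move=> kK; apply/congBP; exists 0%N => /=.
have -> : f ^+ K = f ^+ (K - k) * f ^+ k by rewrite -exprD subnK.
by rewrite mulrA subrr mulr0; apply: is_ideal0 (IpowI n).
Qed.

Variable S : topologicalType.

Lemma foldR_eval (l : seq (Rrep A S * A)) t :
  let q := foldr (@addR _ f S) (zeroR A S) [seq mulR p.1 (iotaR S p.2) | p <- l] in
  foldr (addB f) (zeroB A)
    [seq mulB p.1 (iotaB p.2) | p <- [seq ((p.1.1 t, p.1.2), p.2) | p <- l]] = (q.1 t, q.2).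
Proof. by elim: l => [|p l IHl] //=; rewrite IHl. Qed.

Lemma IpowR_eval n (z : Rrep A S) t : IpowR I f n z -> IpowB I f n (z.1 t, z.2).
Proof.
move=> [l [Il [m Em]]]; exists [seq ((p.1.1 t, p.1.2), p.2) | p <- l]; split.
  by apply/list_all_map; apply: sub_list_all Il => p [].
by exists m; rewrite foldR_eval; apply: Em.
Qed.

Lemma Rvalid_subR (x y : Rrep A S) : Rvalid I x -> Rvalid I y -> Rvalid I (subR f x y).
Proof.
by move=> x_cont y_cont; apply: cont_adicD; apply: cont_adicMr; last apply: cont_adicN.
Qed.

Lemma Rvalid_eval_cont (z : Rrep A S) n s : Rvalid I z ->
  \forall t \near s, congB n (z.1 t, z.2) (z.1 s, z.2).
Proof.
move=> z_cont; apply: filterS (z_cont n s) => t /= Iz; apply/congBP; exists 0%N => /=.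
by rewrite mul1r -mulrBl; exact: (is_idealMr (IpowI n) _ Iz).
Qed.

Lemma foldR_common_denominator (l : seq ((S -> A) * A)) d t :
  let q := foldr (@addR _ f S) (zeroR A S)
    [seq mulR p.1 (iotaR S p.2) | p <- [seq ((p.1, d), p.2) | p <- l]] in
  q.1 t * f ^+ d = (\sum_(p <- l) p.1 t * p.2) * f ^+ q.2.
Proof.
elim: l => [|p l IHl] /=; first by rewrite big_nil !mul0r.
set q := foldr _ _ _ in IHl *; rewrite big_cons addn0.
have -> : (p.1 t * p.2 * f ^+ q.2 + q.1 t * f ^+ d) * f ^+ d =
    p.1 t * p.2 * f ^+ (d + q.2) + (q.1 t * f ^+ d) * f ^+ d by rewrite exprD; ring.
by rewrite IHl exprD; ring.
Qed.

Lemma IpowR_lincomb n (gs : seq A) (c : nat -> S -> A) (G : S -> A) k e :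
  (forall i, (i < size gs)%N -> Ipow I n gs`_i) -> (forall i, cont_adic I (c i)) ->
  (forall t, f ^+ e * G t = lincomb gs (fun i => c i t)) -> IpowR I f n (G, k).
Proof.
move=> gs_Ipow c_cont EG.
pose l := [seq (c i, gs`_i) | i : 'I_(size gs) <- index_enum 'I_(size gs)].
exists [seq ((p.1, (k + e)%N), p.2) | p <- l]; split.
  apply/list_all_map/list_all_map/list_allT => i.
  by split; [apply: c_cont | apply: gs_Ipow].
exists (k + e)%N => t; have /= := foldR_common_denominator l (k + e) t.
set q := foldr _ _ _ => Eq.
have -> : f ^+ (k + e) * (G t * f ^+ q.2 - q.1 t * f ^+ k) =
    f ^+ k * f ^+ q.2 * (f ^+ e * G t) - f ^+ k * (q.1 t * f ^+ (k + e)).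
  by rewrite !exprD; ring.
have El : \sum_(p <- l) p.1 t * p.2 = lincomb gs (fun i => c i t).
  by rewrite big_map; apply: eq_bigr => i _; rewrite mulrC.
by rewrite Eq EG El; ring.
Qed.

End Localization.

Section PointwiseIdeal.
Variables (A : comPzRingType) (I : A -> Prop) (f : A) (S : topologicalType).
Hypotheses (noethA : noetherian_ring A)
  (separatedI : forall x, (forall n, Ipow I n x) -> x = 0)
  (completeI : forall a : nat -> A, (forall n, Ipow I n (a n.+1 - a n)) ->
     exists l, forall n, Ipow I n (l - a n))
  (compactS : compact [set: S]).
Let IpowI := Ipow_ideal I.

Lemma IpowR_pointwise n (z : Rrep A S) : Rvalid I z ->
  (forall t, IpowB I f n (z.1 t, z.2)) -> IpowR I f n z.
Proof.
case: z => G k /= G_cont G_Ipow.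
have [e e_Ipow] : exists e, forall t, Ipow I n (f ^+ e * G t).
  apply: compact_uniform_index => // [i j t ij Ii|s].
    by rewrite -(subnK ij) exprD -mulrA; exact: (is_idealMl (IpowI n) _ Ii).
  have /IpowBP [e Ie] := G_Ipow s; exists e.
  apply: filterS (G_cont n s) => t /= IG; rewrite -(subrK (G s) (G t)) mulrDr.
  exact: (is_idealD (IpowI n) (is_idealMl (IpowI n) _ IG) Ie).
have [gs [gs_Ipow gs_span]] := noetherian_ideal_fg noethA (IpowI n).
have [c [c_cont Ec]] := cont_adic_lincomb gs_span (cont_adicMl (f ^+ e) G_cont) e_Ipow
  separatedI completeI.
exact: IpowR_lincomb gs_Ipow c_cont Ec.
Qed.

Variable h : S -> nat -> Brep A.
Hypotheses (h_elem : forall t, hatB_elem I f (h t)) (h_cont : cont_hatB I f h).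

Lemma cont_hatB_common_denominator : exists x : nat -> Rrep A S,
  (forall n, Rvalid I (x n)) /\ forall n t, congB I f n (Phi x t n) (h t n).
Proof.
pose rep n := class_rep (congB I f n) (fun t => h t n).
have rep_lc n s : \forall t \near s, rep n t = rep n s.
  apply: class_rep_locally_constant (h_cont n) s;
    [apply: congB_refl | apply: congB_sym | apply: congB_trans].
have /choice [K K_ub] : forall n, exists K, forall t, ((h (rep n t) n).2 <= K)%N.
  move=> n; apply: compact_uniform_index => // [i j t ij ti|s].
    exact: leq_trans ti ij.
  by exists (h (rep n s) n).2; apply: filterS (rep_lc n s) => t ->.
exists (fun n => (fun t => (h (rep n t) n).1 * f ^+ (K n - (h (rep n t) n).2), K n)).
split=> [n|n t].
  apply: cont_adic_locally_constant => s.
  by apply: filterS (rep_lc n s) => t /= ->.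
apply: (congB_trans (congB_expand I f n _ (K_ub n t))); rewrite -surjective_pairing.
exact/congB_sym/(class_repP (fun t => h t n) (congB_refl I f n)).
Qed.

Lemma Phi_surj : exists x, hatR_elem I f x /\ forall t, eqHatB I f (Phi x t) (h t).
Proof.
have [x [x_cont x_h]] := cont_hatB_common_denominator.
exists x; split=> [|t n]; last exact: x_h.
split=> // n; apply: IpowR_pointwise; first exact: (Rvalid_subR f (x_cont _) (x_cont _)).
move=> t; change (congB I f n (Phi x t n.+1) (Phi x t n)).
apply: (congB_trans (congBSW (x_h n.+1 t))).
exact: congB_trans (h_elem t n) (congB_sym (x_h n t)).
Qed.

End PointwiseIdeal.

Theorem lemma2p5 (A : comPzRingType) (I : A -> Prop) (S : topologicalType)
    (f : A) :
  noetherian_ring A -> adic_ring I -> profinite S ->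
  [/\
   (* Phi is well defined: lands in continuous maps S -> hat(A[1/f]) ... *)
   (forall x : nat -> Rrep A S, hatR_elem I f x ->
      (forall s, hatB_elem I f (Phi x s)) /\ cont_hatB I f (Phi x)),
   (* ... and respects equality in the completion *)
   (forall x y : nat -> Rrep A S, hatR_elem I f x -> hatR_elem I f y -> eqHatR I f x y ->
      forall s, eqHatB I f (Phi x s) (Phi y s)),
   (* Phi is a ring homomorphism *)
   (forall x y : nat -> Rrep A S, hatR_elem I f x -> hatR_elem I f y -> forall s,
      eqHatB I f (Phi (addHatR f x y) s) (addHatB f (Phi x s) (Phi y s)) /\
      eqHatB I f (Phi (mulHatR x y) s) (mulHatB (Phi x s) (Phi y s))) /\
   (forall s, eqHatB I f (Phi (@oneHatR A S) s) (@oneHatB A)),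
   (* Phi is injective *)
   (forall x y : nat -> Rrep A S, hatR_elem I f x -> hatR_elem I f y ->
      (forall s, eqHatB I f (Phi x s) (Phi y s)) -> eqHatR I f x y) &
   (* Phi is surjective onto C(S, hat(A[1/f])) *)
   (forall h : S -> nat -> Brep A,
      (forall s, hatB_elem I f (h s)) -> cont_hatB I f h ->
      exists x, hatR_elem I f x /\ forall s, eqHatB I f (Phi x s) (h s))].
Proof.
move=> noethA [_ [separatedI completeI]] [compactS _ _]; split.
- move=> x [x_cont x_elem]; split=> [s n|n s]; first exact: IpowR_eval (x_elem n).
  exact: Rvalid_eval_cont.
- by move=> x y _ _ xy s n; apply: IpowR_eval (xy n).
- by split=> [x y _ _ s|s]; [split=> n | move=> n]; apply: congB_refl.
- move=> x y [x_cont _] [y_cont _] xy n.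
  by apply: IpowR_pointwise => //; [apply: Rvalid_subR | move=> t; apply: xy].
- by move=> h h_elem h_cont; apply: Phi_surj.
Qed.
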